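(* Let $k=\overline{\mathbb Q}$ with the trivial valuation and let $G=\operatorname{Spec}k[T]$ be the additive group (Hopf algebra coproduct $\Delta(T)=T\otimes1+1\otimes T$), with $G^{\mathrm{an}}=\operatorname{Hom}_k(k[T],\mathbb T)$ and Berkovich's hyperoperation $\odot$. For $t\in[-\infty,0)$ let $f_t\in\operatorname{Hom}_k(k[T],\mathbb T)$ be the point given by $f_t(g)=r\cdot t$ for $g\ne0$, where $r\ge0$ is the largest integer with $T^r\mid g$ (with the convention $0\cdot(-\infty)=0$), and $f_t(0)=-\infty$. Then for $x,y\in(-\infty,0)$, every $h\in f_x\odot f_y$ satisfies $\{g: h(g)<0\}=(T)$, and $$f_x\odot f_y=\begin{cases}\{f_{\max\{x,y\}}\}&\text{if }x\ne y,\\ \{f_t: t\in[-\infty,x]\}&\text{if }x=y.\end{cases}$$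
   Context: $\mathbb T=\mathbb R\cup\{-\infty\}$ is the tropical hyperfield: multiplication is usual addition with $-\infty$ absorbing, hyperaddition $s\oplus t=\max\{s,t\}$ if $s\ne t$, $s\oplus s=\{u\in\mathbb T:u\le s\}$. The trivial valuation on $k$ sends nonzero elements to $0$ and $0$ to $-\infty$. $\operatorname{Hom}_k(B,\mathbb T)$ is the set of maps $\varphi:B\to\mathbb T$ with $\varphi(0)=-\infty$, $\varphi(1)=0$, $\varphi(xy)=\varphi(x)+\varphi(y)$, $\varphi(x+y)\in\varphi(x)\oplus\varphi(y)$, restricting to the trivial valuation on $k$. With $A=k[T]$, $j_1(a)=a\otimes1$, $j_2(a)=1\otimes a$, Berkovich's hyperoperation is $g\odot h=\{f\in\operatorname{Hom}_k(A,\mathbb T):\exists\beta\in\operatorname{Hom}_k(A\otimes_kA,\mathbb T)\text{ with }\beta\circ j_1=g,\ \beta\circ j_2=h,\ f=\beta\circ\Delta\}$. *)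

From HB Require Import structures.
From Stdlib Require Import Reals.
From mathcomp Require Import all_boot all_order all_algebra all_field.
Set Implicit Arguments. Unset Strict Implicit. Unset Printing Implicit Defensive.
Import GRing.Theory.

(* Tropical hyperfield T = R ∪ {-oo}; None encodes -oo. *)
Definition trop := option R.

Definition tmul (s t : trop) : trop :=
  match s, t with Some a, Some b => Some (Rplus a b) | _, _ => None end.

Definition tle (s t : trop) : Prop :=
  match s, t with
  | None, _ => True
  | Some _, None => False
  | Some a, Some b => Rle a b
  end.
Definition tlt (s t : trop) : Prop := tle s t /\ s <> t.

Definition tmax (s t : trop) : trop :=
  match s, t with
  | None, _ => t
  | _, None => s
  | Some a, Some b => Some (Rmax a b)
  end.

(* u ∈ s ⊕ t : s ⊕ t = {max s t} if s <> t, and {u | u <= s} if s = t *)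
Definition thyp (s t u : trop) : Prop :=
  (s <> t /\ u = tmax s t) \/ (s = t /\ tle u s).

(* φ ∈ Hom_k(B, T), for a k-algebra B given by its structure map emb : k -> B *)
Definition is_khom (B : nzRingType) (emb : algC -> B) (phi : B -> trop) : Prop :=
  [/\ phi 0%R = None, phi 1%R = Some R0,
      (forall x y, phi (x * y)%R = tmul (phi x) (phi y)),
      (forall x y, thyp (phi x) (phi y) (phi (x + y)%R)) &
      (forall c : algC, phi (emb c) = if c == 0%R then None else Some R0)].

(* A = k[T] and A ⊗_k A = k[X, Y] modelled as {poly {poly algC}}
   (inner variable = first tensor factor, outer variable = second). *)
Definition embA (c : algC) : {poly algC} := c%:P.
Definition embAA (c : algC) : {poly {poly algC}} := c%:P%:P.

Definition j1 (p : {poly algC}) : {poly {poly algC}} := p%:P.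
Definition j2 (p : {poly algC}) : {poly {poly algC}} := p ^:P.
(* coproduct: Δ(p)(T) = p(T ⊗ 1 + 1 ⊗ T) *)
Definition Delta (p : {poly algC}) : {poly {poly algC}} :=
  (p ^:P) \Po (('X : {poly algC})%:P + 'X).

Definition odot (g h f : {poly algC} -> trop) : Prop :=
  is_khom embA f /\
  exists beta : {poly {poly algC}} -> trop,
    [/\ is_khom embAA beta,
        (forall a, beta (j1 a) = g a),
        (forall a, beta (j2 a) = h a) &
        (forall a, f a = beta (Delta a))].

(* f_t for t ∈ [-oo, 0): f_t(g) = r * t where r = mup 0 g is the largest r
   with T^r | g, with 0 * (-oo) = 0; f_t(0) = -oo. *)
Definition ft (t : trop) (g : {poly algC}) : trop :=
  if g == 0%R then None
  else let r := mup (0 : algC) g in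
       match t with
       | None => if r == 0%N then Some R0 else None
       | Some a => Some (Rmult (INR r) a)
       end.

(* A point h of the line with h(T) < 0 is determined by t = h(T): writing
   g = T^r q with q(0) <> 0, the constant term of q strictly dominates the rest,
   so h(q) = 0 and h(g) = r t, i.e. h = f_t.  If h is in f_x ⊙ f_y via beta, then
   t = beta(T⊗1 + 1⊗T) lies in x ⊕ y: t = max(x, y) when x <> y and t <= x when
   x = y.  Conversely the required beta are Gauss points of k[X, Y]: X |-> x and
   Y |-> y, or, for x = y and t <= x, X |-> x and Y |-> t precomposed with the
   shear Y |-> Y - X. *)

From Pilot Require Import Defs.
From HB Require Import structures.
From Stdlib Require Import Reals.
From mathcomp Require Import all_boot all_order all_algebra all_field.
From Stdlib Require Import Lra Classical.
From mathcomp Require Import ring.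
Set Implicit Arguments. Unset Strict Implicit.
Import GRing.Theory.

(** * The tropical hyperfield *)

(* [Some R0] and [None] are the one and the zero of the hyperfield; lemma names
   such as [tmulr1], [tmulr0], [khom_le1] refer to them. *)

Lemma tmulC s t : tmul s t = tmul t s.
Proof. by case: s t => [a|] [b|] //=; rewrite Rplus_comm. Qed.

Lemma tmulA s t u : tmul s (tmul t u) = tmul (tmul s t) u.
Proof. by case: s t u => [a|] [b|] [c|] //=; rewrite Rplus_assoc. Qed.

Lemma tmulr1 s : tmul s (Some R0) = s.
Proof. by case: s => [a|] //=; rewrite Rplus_0_r. Qed.

Lemma tmul1r s : tmul (Some R0) s = s.
Proof. by rewrite tmulC tmulr1. Qed.

Lemma tmulr0 s : tmul s None = None.
Proof. by case: s. Qed.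

Lemma tmul_sqr_inj s t : tmul s s = tmul t t -> s = t.
Proof. by case: s t => [a|] [b|] //= [E]; f_equal; lra. Qed.

Lemma tle_refl s : tle s s.
Proof. by case: s => [a|] /=; lra. Qed.

Lemma tle_trans s t u : tle s t -> tle t u -> tle s u.
Proof. by case: s t u => [a|] [b|] [c|] //=; lra. Qed.

Lemma tle_total s t : tle s t \/ tle t s.
Proof. by case: s t => [a|] [b|] /=; auto; lra. Qed.

Lemma tle_antisym s t : tle s t -> tle t s -> s = t.
Proof. by case: s t => [a|] [b|] //= *; f_equal; lra. Qed.

Lemma tlt_le_trans s t u : tlt s t -> tle t u -> tlt s u.
Proof.
move=> [st nst] tu; split; first exact: tle_trans st tu.
by move=> E; subst u; apply: nst; apply: tle_antisym.
Qed.

Lemma tle_lt_trans s t u : tle s t -> tlt t u -> tlt s u.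
Proof.
move=> st [tu ntu]; split; first exact: tle_trans st tu.
by move=> E; subst u; apply: ntu; apply: tle_antisym.
Qed.

Lemma tltR a b : Rlt a b -> tlt (Some a) (Some b).
Proof. by move=> ab; split=> [/=|[E]]; lra. Qed.

Lemma tmaxC s t : tmax s t = tmax t s.
Proof. by case: s t => [a|] [b|] //=; rewrite Rmax_comm. Qed.

Lemma tmaxr0 s : tmax s None = s.
Proof. by case: s. Qed.

Lemma tle_maxl s t : tle s (tmax s t).
Proof. by case: s t => [a|] [b|] //=; [apply: Rmax_l | apply: Rle_refl]. Qed.

Lemma tle_maxr s t : tle t (tmax s t).
Proof. by rewrite tmaxC; apply: tle_maxl. Qed.

Lemma tmax_lub s t u : tle s u -> tle t u -> tle (tmax s t) u.
Proof. by case: s t u => [a|] [b|] [c|] //=; apply: Rmax_lub. Qed.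

Lemma tmax_l s t : tle t s -> tmax s t = s.
Proof. by case: s t => [a|] [b|] //= ?; rewrite Rmax_left. Qed.

Lemma tmax_r s t : tle s t -> tmax s t = t.
Proof. by rewrite tmaxC; apply: tmax_l. Qed.

Lemma tmax_gtl s t : tlt s (tmax s t) -> tmax s t = t.
Proof.
case: (tle_total s t) => [/tmax_r //|ts]; rewrite (tmax_l ts).
by case=> _ [].
Qed.

Lemma tmax_mono s s' t t' : tle s s' -> tle t t' -> tle (tmax s t) (tmax s' t').
Proof.
by move=> ss tt; apply: tmax_lub; [apply: tle_trans ss _; apply: tle_maxl
                                  | apply: tle_trans tt _; apply: tle_maxr].
Qed.

Lemma tmul_maxr c s t : tmul c (tmax s t) = tmax (tmul c s) (tmul c t).
Proof.
case: c s t => [c|] [a|] [b|] //=; f_equal.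
by rewrite /Rmax; do 2 case: Rle_dec => //=; lra.
Qed.

Lemma tle_tmul2l c s t : tle s t -> tle (tmul c s) (tmul c t).
Proof. by case: c s t => [c|] [a|] [b|] //=; lra. Qed.

Lemma tlt_tmul2r c s t : c <> None -> tlt s t -> tlt (tmul s c) (tmul t c).
Proof.
rewrite /tlt; case: c => [c|] // _; case: s t => [a|] [b|] [/= st nst]; split=> //.
- lra.
- by move=> [E]; apply: nst; f_equal; lra.
Qed.

Lemma tmul_lt1 s t : tle s (Some R0) -> tlt t (Some R0) -> tlt (tmul s t) (Some R0).
Proof.
rewrite /tlt; case: s t => [a|] [b|] /= s1 [t1 nt1]; split=> //.
- lra.
- by move=> [E]; apply: nt1; f_equal; lra.
Qed.

Lemma thypE s t u : thyp s t u <-> tle u (tmax s t) /\ (s <> t -> u = tmax s t).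
Proof.
split=> [[[st ->]|[<- us]]|[ust Hst]]; first by split=> //; apply: tle_refl.
- by rewrite tmax_l //; apply: tle_refl.
- case: (classic (s = t)) => [Est|]; last by left; split=> //; apply: Hst.
  by right; split=> //; move: ust; rewrite Est tmax_l //; apply: tle_refl.
Qed.

Lemma thyp_le s t u : thyp s t u -> tle u (tmax s t).
Proof. by case/thypE. Qed.

Lemma thyp_gt s t u : thyp s t u -> tlt t s -> u = s.
Proof. by case/thypE=> _ Hst [ts nts]; rewrite Hst ?tmax_l // => E; apply: nts. Qed.

Lemma thypC s t u : thyp s t u -> thyp t s u.
Proof. by rewrite !thypE tmaxC => -[ust Hst]; split=> // ts; apply: Hst => E; apply: ts. Qed.

Lemma thyp_None t : thyp None t t.
Proof. by apply/thypE; split=> //; apply: tle_refl. Qed.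

Lemma thyp_tmul c s t u : thyp s t u -> thyp (tmul c s) (tmul c t) (tmul c u).
Proof.
rewrite !thypE -tmul_maxr => -[ust Hst]; split; first exact: tle_tmul2l.
move=> Ecst; rewrite Hst // => Est; apply: Ecst; by rewrite Est.
Qed.

Lemma thyp_max_gt a1 b1 c1 a2 b2 c2 : thyp a1 b1 c1 -> thyp a2 b2 c2 ->
  tlt (tmax b1 b2) (tmax a1 a2) -> tmax c1 c2 = tmax a1 a2.
Proof.
wlog a21 : a1 b1 c1 a2 b2 c2 / tle a2 a1.
  move=> Hwlog H1 H2; case: (tle_total a2 a1) => a12; first exact: Hwlog.
  by rewrite (tmaxC c1) (tmaxC b1) (tmaxC a1); apply: Hwlog.
move=> H1 H2; rewrite (tmax_l a21) => ba.
have b1a1 : tlt b1 a1 by apply: tle_lt_trans ba; apply: tle_maxl.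
rewrite (thyp_gt H1 b1a1) tmax_l //.
apply: tle_trans (thyp_le H2) _; apply: tmax_lub => //.
by apply: tle_trans (proj1 ba); apply: tle_maxr.
Qed.

Lemma thyp_max a1 b1 c1 a2 b2 c2 : thyp a1 b1 c1 -> thyp a2 b2 c2 ->
  thyp (tmax a1 a2) (tmax b1 b2) (tmax c1 c2).
Proof.
move=> H1 H2; apply/thypE; split.
  apply: tmax_lub.
  - by apply: tle_trans (thyp_le H1) _; apply: tmax_mono; apply: tle_maxl.
  - by apply: tle_trans (thyp_le H2) _; apply: tmax_mono; apply: tle_maxr.
move=> nab; case: (tle_total (tmax b1 b2) (tmax a1 a2)) => ba.
  by rewrite (tmax_l ba); apply: (thyp_max_gt H1 H2); split=> // E; apply: nab.
rewrite (tmax_r ba); apply: (thyp_max_gt (thypC H1) (thypC H2)).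
by split=> // E; apply: nab.
Qed.

Local Open Scope ring_scope.

Lemma khomN (B : nzRingType) (emb : algC -> B) v x : is_khom emb v -> v (- x) = v x.
Proof. by case=> _ _ vM _ _; apply: tmul_sqr_inj; rewrite -!vM mulrNN. Qed.

Lemma eq_khom (B : nzRingType) (emb : algC -> B) v w :
  v =1 w -> is_khom emb v -> is_khom emb w.
Proof. by move=> E [v0 v1 vM vD vC]; split=> *; rewrite -!E. Qed.

Lemma khom_rmorph (A B : nzRingType) (eA : algC -> A) (eB : algC -> B)
    (phi : {rmorphism A -> B}) v :
  (forall c, phi (eA c) = eB c) -> is_khom eB v -> is_khom eA (v \o phi).
Proof.
move=> phiC [v0 v1 vM vD vC]; split=> [|||x y|c] /=.
- by rewrite rmorph0.
- by rewrite rmorph1.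
- by move=> x y; rewrite rmorphM.
- by rewrite rmorphD.
- by rewrite phiC.
Qed.

(** * Gauss points *)

(* [gauss v b F] is [max_i (v F_i + i b)], the Gauss extension of [v] to [R[X]]
   with [X |-> b], evaluated by Horner's scheme. *)
Fixpoint gauss_seq (R : Type) (v : R -> trop) (b : trop) (s : seq R) : trop :=
  if s is c :: s' then tmax (v c) (tmul b (gauss_seq v b s')) else None.

Definition gauss (R : nzRingType) (v : R -> trop) (b : trop) (F : {poly R}) : trop :=
  gauss_seq v b F.

Section GaussPoint.
Variables (R : comNzRingType) (emb : algC -> R) (v : R -> trop) (b : trop).
Hypothesis hv : is_khom emb v.

Let v0 : v 0 = None. Proof. by case: hv. Qed.
Let v1 : v 1 = Some R0. Proof. by case: hv. Qed.
Let vM x y : v (x * y) = tmul (v x) (v y). Proof. by case: hv. Qed.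
Let vD x y : thyp (v x) (v y) (v (x + y)). Proof. by case: hv. Qed.

Local Notation G := (gauss v b).

Lemma gauss0 : G 0 = None.
Proof. by rewrite /gauss polyseq0. Qed.

Lemma gauss_MXaddC F c : G (F * 'X + c%:P) = tmax (v c) (tmul b (G F)).
Proof.
rewrite -cons_poly_def /gauss polyseq_cons nil_poly.
have [->|] := eqVneq F 0; last by [].
rewrite polyseqC polyseq0 /= tmulr0 tmaxr0.
by have [->|] := eqVneq c 0; rewrite /= ?v0 // tmulr0 tmaxr0.
Qed.

Lemma gaussC c : G c%:P = v c.
Proof. by rewrite -[c%:P]add0r -(mul0r 'X) gauss_MXaddC gauss0 tmulr0 tmaxr0. Qed.

Lemma gaussMX F : G (F * 'X) = tmul b (G F).
Proof. by rewrite -[F * 'X]addr0 -polyC0 gauss_MXaddC v0. Qed.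

Lemma gaussX : G 'X = b.
Proof. by rewrite -['X]mul1r gaussMX -polyC1 gaussC v1 tmulr1. Qed.

Lemma gauss_XsubC c : G ('X - c%:P) = tmax (v c) b.
Proof.
by rewrite -['X]mul1r -polyCN gauss_MXaddC -polyC1 gaussC v1 tmulr1 (khomN _ hv).
Qed.

Lemma gaussCM c F : G (c%:P * F) = tmul (v c) (G F).
Proof.
elim/poly_ind: F => [|F d IH]; first by rewrite mulr0 gauss0 tmulr0.
have -> : c%:P * (F * 'X + d%:P) = (c%:P * F) * 'X + (c * d)%:P.
  by rewrite polyCM; ring.
by rewrite !gauss_MXaddC IH vM tmul_maxr !tmulA (tmulC b).
Qed.

Lemma gaussD F H : thyp (G F) (G H) (G (F + H)).
Proof.
elim/poly_ind: F H => [|F c IH] H; first by rewrite gauss0 add0r; apply: thyp_None.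
elim/poly_ind: H => [|H d _]; first by rewrite gauss0 addr0; apply/thypC/thyp_None.
have -> : F * 'X + c%:P + (H * 'X + d%:P) = (F + H) * 'X + (c + d)%:P.
  by rewrite polyCD; ring.
by rewrite !gauss_MXaddC; apply: thyp_max => //; apply: thyp_tmul.
Qed.

Lemma gaussM_le F H : tle (G (F * H)) (tmul (G F) (G H)).
Proof.
elim/poly_ind: H => [|H d IH]; first by rewrite mulr0 gauss0 tmulr0.
have -> : F * (H * 'X + d%:P) = (F * H) * 'X + d%:P * F by ring.
apply: tle_trans (thyp_le (gaussD _ _)) _.
rewrite gaussMX gaussCM gauss_MXaddC tmul_maxr tmaxC (tmulC _ (v d)).
apply: tmax_mono; first exact: tle_refl.
by rewrite tmulA (tmulC _ b) -tmulA; apply: tle_tmul2l.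
Qed.

(* If the constant term of [F] does not realise [G F], the linear part does,
   and it dominates the product strictly. *)
Lemma gaussM_ge_MXaddC F a H : tlt (v a) (G (F * 'X + a%:P)) ->
  tle (tmul (G F) (G H)) (G (F * H)) ->
  tle (tmul (G (F * 'X + a%:P)) (G H)) (G ((F * 'X + a%:P) * H)).
Proof.
move=> aF IH; case: (classic (G H = None)) => [->|H0]; first by rewrite tmulr0.
have EF : G (F * 'X + a%:P) = tmul b (G F).
  by move: aF; rewrite gauss_MXaddC => /tmax_gtl.
have -> : (F * 'X + a%:P) * H = (F * H) * 'X + a%:P * H by ring.
have lin : tle (tmul (G (F * 'X + a%:P)) (G H)) (G (F * H * 'X)).
  by rewrite gaussMX EF -tmulA; apply: tle_tmul2l.
have lt : tlt (G (a%:P * H)) (G (F * H * 'X)).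
  by rewrite gaussCM; apply: tlt_le_trans lin; apply: tlt_tmul2r.
by rewrite (thyp_gt (gaussD _ _) lt).
Qed.

Lemma gaussM_ge F H : tle (tmul (G F) (G H)) (G (F * H)).
Proof.
elim/poly_ind: F H => [|F a IHF] H; first by rewrite gauss0.
elim/poly_ind: H => [|H c IHH]; first by rewrite gauss0 tmulr0.
have le_const d K : tle (v d) (G (K * 'X + d%:P)).
  by rewrite gauss_MXaddC; apply: tle_maxl.
case: (classic (v a = G (F * 'X + a%:P))) => [Ea|na]; last first.
  by apply: gaussM_ge_MXaddC => //; split.
case: (classic (v c = G (H * 'X + c%:P))) => [Ec|nc]; last first.
  rewrite [_ * (H * 'X + _)]mulrC tmulC; apply: gaussM_ge_MXaddC; first by split.
  by rewrite tmulC [H * _]mulrC.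
have -> : (F * 'X + a%:P) * (H * 'X + c%:P) = (F * H * 'X + F * c%:P + a%:P * H) * 'X + (a * c)%:P.
  by rewrite polyCM; ring.
by rewrite -Ea -Ec -vM.
Qed.

Lemma gauss_khom : is_khom (fun c => (emb c)%:P) G.
Proof.
split=> [||x y|x y|c]; first exact: gauss0.
- by rewrite -polyC1 gaussC.
- by apply: tle_antisym; [apply: gaussM_le | apply: gaussM_ge].
- exact: gaussD.
- by rewrite gaussC; case: hv.
Qed.
End GaussPoint.

(** * Points of the affine line *)

Section PointsOfAffineLine.
Variable h : {poly algC} -> trop.
Hypotheses (hh : is_khom embA h) (hX : tlt (h 'X) (Some R0)).

Let h0 : h 0 = None. Proof. by case: hh. Qed.
Let hM p q : h (p * q) = tmul (h p) (h q). Proof. by case: hh. Qed.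
Let hD p q : thyp (h p) (h q) (h (p + q)). Proof. by case: hh. Qed.
Let hC c : h c%:P = if c == 0 then None else Some R0. Proof. by case: hh. Qed.
Let decomp (g : {poly algC}) : g = g %/ 'X * 'X + g.[0]%:P.
Proof. by have := divp_eq g ('X - 0%:P); rewrite modp_XsubC subr0. Qed.

Lemma khom_le1 g : tle (h g) (Some R0).
Proof.
elim/poly_ind: g => [|p c IH]; first by rewrite h0.
apply: tle_trans (thyp_le (hD _ _)) _; apply: tmax_lub.
  by rewrite hM; apply: proj1 (tmul_lt1 IH hX).
by rewrite hC; case: (c == 0) => /=; lra.
Qed.

Lemma khom_unit g : ~~ root g 0 -> h g = Some R0.
Proof.
rewrite /root => /negbTE g0; rewrite (decomp g).
have lt : tlt (h (g %/ 'X * 'X)) (h g.[0]%:P).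
  by rewrite hC g0 hM; apply: tmul_lt1 (khom_le1 _) hX.
by rewrite (thyp_gt (thypC (hD _ _)) lt) hC g0.
Qed.

Lemma khom_lt1 g : tlt (h g) (Some R0) <-> ('X %| g).
Proof.
rewrite -['X]subr0 dvdp_XsubCl; case: (boolP (root g 0)) => [g0|/khom_unit ->].
  split=> // _; rewrite (decomp g); move: g0; rewrite /root => /eqP ->.
  by rewrite addr0 hM; apply: tmul_lt1 (khom_le1 _) hX.
by split=> // -[].
Qed.

Lemma khom_Xn n : h ('X ^+ n) = match h 'X with
  | Some a => Some (Rmult (INR n) a)
  | None => if n == 0%N then Some R0 else None end.
Proof.
elim: n => [|n IH].
  by rewrite expr0 -polyC1 hC oner_eq0; case: (h 'X) => //= a; rewrite Rmult_0_l.
rewrite exprSr hM IH; case: (h 'X) => [a|] //=; last by rewrite tmulr0.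
by f_equal; case: n {IH} => [|n] /=; lra.
Qed.

Lemma khom_ftE g : h g = ft (h 'X) g.
Proof.
rewrite /ft; have [->|g0] := eqVneq g 0; first by rewrite h0.
have [m [q]] := multiplicity_XsubC g 0; rewrite g0 /= => q0 ->.
by rewrite mupMr // mup_XsubCX eqxx hM khom_unit // tmul1r subr0 khom_Xn.
Qed.
End PointsOfAffineLine.

Lemma ftX t : ft t 'X = t.
Proof.
rewrite /ft polyX_eq0 -['X]subr0 -['X - _]expr1 mup_XsubCX eqxx.
by case: t => //= a; rewrite Rmult_1_l.
Qed.

(** * The hyperoperation *)

Section Coproduct.
Variable beta : {poly {poly algC}} -> trop.
Hypothesis hbeta : is_khom embAA beta.

Lemma khom_j1 : is_khom embA (beta \o j1).
Proof. exact: (khom_rmorph (phi := polyC) _ hbeta). Qed.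

Lemma khom_j2 : is_khom embA (beta \o j2).
Proof.
apply: (khom_rmorph (eA := embA) (phi := map_poly polyC) _ hbeta) => c.
exact: map_polyC.
Qed.

Lemma khom_Delta : is_khom embA (beta \o Defs.Delta).
Proof.
have hcomp : is_khom embAA (beta \o comp_poly ('X%:P + 'X)).
  by apply: (khom_rmorph (eA := embAA) (phi := comp_poly _) _ hbeta) => c; apply: comp_polyC.
by apply: (khom_rmorph (eA := embA) (phi := map_poly polyC) _ hcomp) => c; apply: map_polyC.
Qed.

Lemma thyp_Delta : thyp (beta (j1 'X)) (beta (j2 'X)) (beta (Defs.Delta 'X)).
Proof. by rewrite /Defs.Delta /j2 map_polyX comp_polyX; case: hbeta. Qed.
End Coproduct.

Lemma Delta_X_lt1 beta x y : Rlt x R0 -> Rlt y R0 -> is_khom embAA beta ->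
  beta (j1 'X) = Some x -> beta (j2 'X) = Some y ->
  tlt (beta (Defs.Delta 'X)) (Some R0).
Proof.
move=> x0 y0 hbeta E1 E2; apply: tle_lt_trans (thyp_le (thyp_Delta hbeta)) _.
by rewrite E1 E2; apply: tltR; apply: Rmax_lub_lt.
Qed.

Lemma odot_ftP x y h : Rlt x R0 -> Rlt y R0 ->
  odot (ft (Some x)) (ft (Some y)) h <->
  exists beta, [/\ is_khom embAA beta, beta (j1 'X) = Some x, beta (j2 'X) = Some y
                 & h =1 ft (beta (Defs.Delta 'X))].
Proof.
move=> x0 y0; split.
  move=> [hh [beta [hbeta E1 E2 E3]]].
  have E1X : beta (j1 'X) = Some x by rewrite E1 ftX.
  have E2X : beta (j2 'X) = Some y by rewrite E2 ftX.
  exists beta; split=> // g; rewrite -E3; apply: khom_ftE => //.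
  by rewrite E3; apply: Delta_X_lt1 E1X E2X.
move=> [beta [hbeta E1 E2 Eh]].
have lt := Delta_X_lt1 x0 y0 hbeta E1 E2.
have EDelta : beta \o Defs.Delta =1 h.
  by move=> g; rewrite Eh; apply: (khom_ftE (khom_Delta hbeta) lt).
split; first exact: eq_khom EDelta (khom_Delta hbeta).
exists beta; split=> // a.
- by rewrite -E1; apply: (khom_ftE (khom_j1 hbeta)); rewrite /= E1; apply: tltR.
- by rewrite -E2; apply: (khom_ftE (khom_j2 hbeta)); rewrite /= E2; apply: tltR.
- by rewrite -EDelta.
Qed.

Definition trivial_val (c : algC) : trop := if c == 0 then None else Some R0.

Lemma trivial_val_khom : is_khom (fun c => c) trivial_val.
Proof.
rewrite /trivial_val; split=> [||a b|a b|c] //; rewrite ?eqxx ?oner_eq0 //.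
  by rewrite mulf_eq0; case: (a == 0); case: (b == 0) => //=; rewrite Rplus_0_r.
have [->|a0] := eqVneq a 0; first by rewrite add0r; apply: thyp_None.
have [->|b0] := eqVneq b 0; first by rewrite addr0 (negbTE a0); apply/thypC/thyp_None.
by right; split=> //; case: (_ == 0) => /=; lra.
Qed.

Definition gauss_point (x : R) (t : trop) : {poly {poly algC}} -> trop :=
  gauss (gauss trivial_val (Some x)) t.

Lemma gauss_point_inner_khom x : is_khom embA (gauss trivial_val (Some x)).
Proof. exact: gauss_khom trivial_val_khom. Qed.

Lemma gauss_point_khom x t : is_khom embAA (gauss_point x t).
Proof. exact: gauss_khom (gauss_point_inner_khom x). Qed.

Lemma gauss_point_j1X x t : gauss_point x t (j1 'X) = Some x.
Proof. by rewrite /gauss_point /j1 (gaussC _ (gauss_point_inner_khom x)) (gaussX _ trivial_val_khom). Qed.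

Lemma gauss_point_j2X x t : gauss_point x t (j2 'X) = t.
Proof. by rewrite /gauss_point /j2 map_polyX (gaussX _ (gauss_point_inner_khom x)). Qed.

(* Precomposing with the shear [Y |-> Y - X] moves the value [t] from [Y] to
   [Delta 'X = X + Y], while [Y] itself gets the value [max x t = x]. *)
Definition sheared_gauss_point (x : R) (t : trop) (F : {poly {poly algC}}) : trop :=
  gauss_point x t (F \Po ('X - ('X)%:P)).

Lemma sheared_gauss_point_khom x t : is_khom embAA (sheared_gauss_point x t).
Proof.
apply: (khom_rmorph (eA := embAA) (phi := comp_poly _) _ (gauss_point_khom x t)).
by move=> c; apply: comp_polyC.
Qed.

Lemma sheared_gauss_point_j1X x t : sheared_gauss_point x t (j1 'X) = Some x.
Proof. by rewrite /sheared_gauss_point comp_polyC gauss_point_j1X. Qed.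

Lemma sheared_gauss_point_j2X x t : tle t (Some x) ->
  sheared_gauss_point x t (j2 'X) = Some x.
Proof.
move=> tx; rewrite /sheared_gauss_point /j2 map_polyX comp_polyX.
by rewrite /gauss_point (gauss_XsubC _ (gauss_point_inner_khom x)) (gaussX _ trivial_val_khom) tmax_l.
Qed.

Lemma sheared_gauss_point_DeltaX x t : sheared_gauss_point x t (Defs.Delta 'X) = t.
Proof.
rewrite /sheared_gauss_point /Defs.Delta map_polyX comp_polyX comp_polyD comp_polyC.
by rewrite comp_polyX addrC subrK /gauss_point (gaussX _ (gauss_point_inner_khom x)).
Qed.

Theorem lemma5p27 (x y : R) (hx : Rlt x R0) (hy : Rlt y R0) :
  (forall h, odot (ft (Some x)) (ft (Some y)) h ->
     forall g : {poly algC}, tlt (h g) (Some R0) <-> (('X : {poly algC}) %| g)%R)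
  /\ (x <> y -> forall h, odot (ft (Some x)) (ft (Some y)) h <->
                          h =1 ft (Some (Rmax x y)))
  /\ (x = y -> forall h, odot (ft (Some x)) (ft (Some y)) h <->
                         exists t : trop, tle t (Some x) /\ h =1 ft t).
Proof.
split; [|split].
- move=> h hxy; have [hh _] := hxy; apply: khom_lt1 => //.
  have [beta [hbeta E1 E2 Eh]] := (odot_ftP _ hx hy).1 hxy.
  by rewrite Eh ftX; apply: Delta_X_lt1 E1 E2.
- move=> nxy h; rewrite odot_ftP //; split.
    move=> [beta [hbeta E1 E2 Eh]] g; rewrite Eh; congr ft.
    by move: (thyp_Delta hbeta); rewrite E1 E2 => /thypE [_ ->] // [].
  move=> Eh; exists (gauss_point x (Some y)).
  split; [exact: gauss_point_khom | exact: gauss_point_j1X | exact: gauss_point_j2X |].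
  move=> g; rewrite Eh; congr ft.
  have := thyp_Delta (gauss_point_khom x (Some y)).
  by rewrite gauss_point_j1X gauss_point_j2X => /thypE [_ ->] // [].
- move=> <- h; rewrite odot_ftP //; split.
    move=> [beta [hbeta E1 E2 Eh]]; exists (beta (Defs.Delta 'X)); split=> //.
    by move: (thyp_le (thyp_Delta hbeta)); rewrite E1 E2 /= Rmax_left //; apply: Rle_refl.
  move=> [t [tx Eh]]; exists (sheared_gauss_point x t).
  split; [exact: sheared_gauss_point_khom | exact: sheared_gauss_point_j1X
         | exact: sheared_gauss_point_j2X | ].
  by move=> g; rewrite Eh sheared_gauss_point_DeltaX.
Qed.
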